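(* Let $G=G_1\times G_2$ be a product of commutative groups, $1<p<\infty$, and $f$ a nonnegative function in $\ell^1(G)$. For $x\in G_1$ define $f_x(y)=f(x,y)$, a function on $G_2$, and let $g(x)=\gamma_p(f_x)$ (computed in $G_2$), a function on $G_1$. Then $\gamma_p(f)\ge\gamma_p(g)$, where $\gamma_p(g)$ is computed in $G_1$.
   Context: For nonnegative functions $f,g$ on a commutative group $K$, $(f\star g)(x)=\max_t f(t)g(x-t)$. For nonnegative $f\in\ell^1(K)$ and $1/p+1/q=1$, $\gamma_p(f)=\inf_{g,h}\frac{\|f\star g\star h\|_1}{\|g\|_p\|h\|_q}$, infimum over nonzero nonnegative $g,h\in\ell^1(K)$. *)

From HB Require Import structures.
From mathcomp Require Import all_boot all_order all_algebra.
From mathcomp Require Import all_classical all_reals all_analysis.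
Set Implicit Arguments. Unset Strict Implicit. Unset Printing Implicit Defensive.
Import Order.TTheory GRing.Theory Num.Theory.
Local Open Scope classical_set_scope.
Local Open Scope ring_scope.

Section Defs.
Context {R : realType} {K : zmodType}.

Definition nonneg (f : K -> R) : Prop := forall x, 0 <= f x.

Definition ell1 (f : K -> R) : Prop := (\esum_(x in [set: K]) `|f x|%:E < +oo)%E.

Definition norm1 (f : K -> R) : R := fine (\esum_(x in [set: K]) `|f x|%:E).

Definition lpnorm (p : R) (f : K -> R) : R :=
  (fine (\esum_(x in [set: K]) (`|f x| `^ p)%:E)) `^ p^-1.

(* max-convolution (f * g)(x) = max_t f(t) g(x - t) (supremum, attained for l^1 nonneg f,g) *)
Definition maxconv (f g : K -> R) : K -> R :=
  fun x => sup [set f t * g (x - t) | t in [set: K]].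

Definition conj_exp (p : R) : R := p / (p - 1).

Definition gamma (p : R) (f : K -> R) : \bar R :=
  ereal_inf [set r : \bar R | exists (g h : K -> R),
     [/\ nonneg g /\ ell1 g /\ g <> (fun _ => 0),
         nonneg h /\ ell1 h /\ h <> (fun _ => 0) &
         r = (norm1 (maxconv (maxconv f g) h) /
               (lpnorm p g * lpnorm (conj_exp p) h))%:E]].

End Defs.

From HB Require Import structures.
From mathcomp Require Import all_boot all_order all_algebra.
From mathcomp Require Import all_classical all_reals all_analysis.
Set Implicit Arguments.
Unset Strict Implicit.
Unset Printing Implicit Defensive.

Import Order.TTheory GRing.Theory Num.Theory.
Local Open Scope classical_set_scope.
Local Open Scope ring_scope.

(* Let g, h be admissible on G1 x G2 and put N_g(x) = ||g(x,.)||_p and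
   N_h(x) = ||h(x,.)||_q. By Fubini, ||N_g||_p = ||g||_p and
   ||N_h||_q = ||h||_q.
   For x, u, a in G1, testing gamma_p(f_x) against the slices g(u-x,.) and
   h(a-u,.) gives
     gamma_p(f_x) N_g(u-x) N_h(a-u) <= ||f_x * g(u-x,.) * h(a-u,.)||_1
                                    <= sum_b (f * g * h)(a,b),
   because a max-convolution of slices is dominated by the corresponding slice
   of the max-convolution. Maximising over x and u and summing over a gives
   ||gamma_p(f_.) * N_g * N_h||_1 <= ||f * g * h||_1, so the pair (N_g, N_h)
   witnesses the inequality. *)

Section esum_setT.
Context {R : realType}.

Lemma esum_ge_term {T : choiceType} (a : T -> \bar R) x :
  (forall i, 0 <= a i)%E -> (a x <= \esum_(i in [set: T]) a i)%E.
Proof.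
move=> a0; apply: esum_ge; exists [set x]; last by rewrite fsbig_set1.
by split=> //; exact: finite_set1.
Qed.

Lemma esumZl_le {T : choiceType} (c : R) (a : T -> R) : 0 <= c ->
  (forall i, 0 <= a i) ->
  (\esum_(i in [set: T]) (c * a i)%:E <=
     c%:E * \esum_(i in [set: T]) (a i)%:E)%E.
Proof.
move=> c0 a0; apply: ge_ereal_sup => _ [X [finX _] <-].
rewrite (fsbig_finite _ _ finX).
under eq_bigr do rewrite EFinM.
rewrite -ge0_sume_distrr; last by move=> i _; rewrite lee_fin.
apply: lee_wpmul2l; first by rewrite lee_fin.
by apply: ereal_sup_ubound; exists X => //; rewrite (fsbig_finite _ _ finX).
Qed.

Lemma esum_pair {T1 T2 : choiceType} (F : T1 * T2 -> \bar R) :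
  (forall z, 0 <= F z)%E ->
  \esum_(z in [set: T1 * T2]) F z =
  \esum_(a in [set: T1]) \esum_(b in [set: T2]) F (a, b).
Proof.
move=> F0; rewrite esum_esum//.
have -> : [set: T1] `*`` (fun=> [set: T2]) = [set: T1 * T2].
  by apply/seteqP; split => -[].
by apply: eq_esum => -[].
Qed.

Lemma esum_swap {T1 T2 : choiceType} (F : T1 -> T2 -> \bar R) :
  (forall a b, 0 <= F a b)%E ->
  \esum_(a in [set: T1]) \esum_(b in [set: T2]) F a b =
  \esum_(b in [set: T2]) \esum_(a in [set: T1]) F a b.
Proof.
move=> F0.
rewrite -(esum_pair (F := fun z => F z.1 z.2)) //.
rewrite -(esum_pair (F := fun z => F z.2 z.1)) //.
rewrite (reindex_esum [set: T2 * T1] [set: T1 * T2] (fun z => (z.2, z.1))) //.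
split=> //; first by move=> [? ?] [? ?] _ _ [-> ->].
by move=> [a b] _; exists (b, a).
Qed.

Lemma esum_shift {K : zmodType} (a : K -> \bar R) (u : K) :
  \esum_(z in [set: K]) a (z - u) = \esum_(z in [set: K]) a z.
Proof.
rewrite [RHS](reindex_esum [set: K] [set: K] (fun z => z - u)) //.
split=> //; first by move=> x y _ _ /addIr.
by move=> z _; exists (z + u) => //; rewrite addrK.
Qed.

End esum_setT.

Lemma fine_le_EFin {R : realType} (x : \bar R) (r : R) :
  (x <= r%:E)%E -> 0 <= r -> fine x <= r.
Proof. by case: x => //= x; rewrite lee_fin. Qed.

Section ell1.
Context {R : realType} {K : zmodType}.
Implicit Types (F H : K -> R).

Lemma norm1_ge0 F : 0 <= norm1 F.
Proof. by apply: fine_ge0; apply: esum_ge0 => *; rewrite lee_fin. Qed.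

Lemma esum_norm1 F : nonneg F -> ell1 F ->
  \esum_(z in [set: K]) (F z)%:E = (norm1 F)%:E.
Proof.
move=> F0 F1; rewrite /norm1 fineK; last first.
  by rewrite ge0_fin_numE//; apply: esum_ge0 => *; rewrite lee_fin.
by apply: eq_esum => z _; rewrite ger0_norm.
Qed.

Lemma le_norm1_term F t : nonneg F -> ell1 F -> F t <= norm1 F.
Proof.
move=> F0 F1; rewrite -lee_fin -esum_norm1//.
by apply: (esum_ge_term (a := fun i => (F i)%:E)) => i; rewrite lee_fin.
Qed.

Lemma ell1_le F H : nonneg F -> (forall t, F t <= H t) -> ell1 H -> ell1 F.
Proof.
move=> F0 FH; apply: le_lt_trans; apply: le_esum => t _.
by rewrite lee_fin !ger0_norm ?FH // (le_trans (F0 t)).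
Qed.

Lemma le_norm1 F H : nonneg F -> (forall t, F t <= H t) -> ell1 H ->
  norm1 F <= norm1 H.
Proof.
move=> F0 FH H1; have H0 t : 0 <= H t by rewrite (le_trans (F0 t)).
rewrite -lee_fin -!esum_norm1 //; last exact: ell1_le H1.
by apply: le_esum => t _; rewrite lee_fin.
Qed.

End ell1.

Section maxconv.
Context {R : realType} {K : zmodType}.
Implicit Types (F H : K -> R).

Lemma maxconv_le F H z c :
  (forall t, F t * H (z - t) <= c) -> maxconv F H z <= c.
Proof.
move=> hc; apply: ge_sup; first by exists (F 0 * H (z - 0)), 0.
by move=> _ [t _ <-]; apply: hc.
Qed.

Lemma maxconv_ge_bounded F H z t M : (forall t, F t * H (z - t) <= M) ->
  F t * H (z - t) <= maxconv F H z.
Proof.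
move=> hM; apply: ub_le_sup; last by exists t.
by exists M => _ [t' _ <-]; apply: hM.
Qed.

Lemma maxconv_ge F H z t : nonneg F -> nonneg H -> ell1 F -> ell1 H ->
  F t * H (z - t) <= maxconv F H z.
Proof.
(* l^1 functions are bounded by their norm, so the [sup] in [maxconv] exists. *)
move=> F0 H0 F1 H1.
apply: (@maxconv_ge_bounded _ _ _ _ (norm1 F * norm1 H)) => s.
by apply: ler_pM; rewrite ?le_norm1_term.
Qed.

Lemma maxconv_ge0 F H z : nonneg F -> nonneg H -> 0 <= maxconv F H z.
Proof.
move=> F0 H0; rewrite /maxconv.
(* Without a supremum, [sup] returns the junk value [0]. *)
have [hs|/sup_out->//] :=
  pselect (has_sup [set F t * H (z - t) | t in [set: K]]).
have /ubP ub := sup_upper_bound hs.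
by apply: le_trans (ub (F 0 * H (z - 0)) _); [rewrite mulr_ge0|exists 0].
Qed.

Lemma maxconv_nonneg F H : nonneg F -> nonneg H -> nonneg (maxconv F H).
Proof. by move=> F0 H0 z; apply: maxconv_ge0. Qed.

Lemma maxconv_mulr_le F H z c M : 0 <= c -> 0 <= M ->
  (forall t, F t * H (z - t) * c <= M) -> maxconv F H z * c <= M.
Proof.
rewrite le_eqVlt => /predU1P[<- M0 _|c0 _ FHM]; first by rewrite mulr0.
by rewrite -ler_pdivlMr //; apply: maxconv_le => t; rewrite ler_pdivlMr.
Qed.

Lemma le_maxconvl F F' H z : nonneg F' -> nonneg H -> ell1 F' -> ell1 H ->
  (forall t, F t <= F' t) -> maxconv F H z <= maxconv F' H z.
Proof.
move=> F'0 H0 F'1 H1 FF'; apply: maxconv_le => t.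
by apply: le_trans (maxconv_ge z t F'0 H0 F'1 H1); apply: ler_wpM2r.
Qed.

Lemma maxconv_le_esum F H z : nonneg F -> nonneg H ->
  ((maxconv F H z)%:E <= \esum_(t in [set: K]) (F t * H (z - t))%:E)%E.
Proof.
move=> F0 H0; set E := esum _ _.
have termE t : ((F t * H (z - t))%:E <= E)%E.
  apply: (esum_ge_term (a := fun t => (F t * H (z - t))%:E)) => s.
  by rewrite lee_fin mulr_ge0.
have E0 : (0 <= E)%E by apply: le_trans (termE 0); rewrite lee_fin mulr_ge0.
have [->|Eoo] := eqVneq E +oo%E; first exact: leey.
have fE : E \is a fin_num by rewrite ge0_fin_numE // ltey.
rewrite -(fineK fE) lee_fin; apply: maxconv_le => t.
by rewrite -lee_fin fineK.
Qed.

Lemma esum_maxconv_le F H : nonneg F -> nonneg H -> ell1 F -> ell1 H ->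
  (\esum_(z in [set: K]) (maxconv F H z)%:E <= (norm1 F * norm1 H)%:E)%E.
Proof.
move=> F0 H0 F1 H1.
apply: le_trans (le_esum (fun z _ => maxconv_le_esum z F0 H0)) _.
rewrite esum_swap; last by move=> *; rewrite lee_fin mulr_ge0.
have inner u :
    (\esum_(z in [set: K]) (F u * H (z - u))%:E <= (norm1 H * F u)%:E)%E.
  apply: le_trans (esumZl_le (F0 u) (fun z => H0 (z - u))) _.
  by rewrite (esum_shift (fun z => (H z)%:E)) esum_norm1// -EFinM mulrC.
apply: le_trans (le_esum (fun u _ => inner u)) _.
apply: le_trans (esumZl_le (norm1_ge0 H) F0) _.
by rewrite esum_norm1 // -EFinM mulrC.
Qed.

Lemma ell1_maxconv F H : nonneg F -> nonneg H -> ell1 F -> ell1 H ->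
  ell1 (maxconv F H).
Proof.
move=> F0 H0 F1 H1; apply: le_lt_trans (ltry (norm1 F * norm1 H)).
apply: le_trans (esum_maxconv_le F0 H0 F1 H1).
by apply: le_esum => z _; rewrite ger0_norm ?maxconv_ge0.
Qed.

End maxconv.

Section lpnorm.
Context {R : realType} {K : zmodType}.
Implicit Types (a : K -> R) (r : R).

Lemma lpnorm_ge0 r a : 0 <= lpnorm r a.
Proof. exact: powR_ge0. Qed.

Lemma lpnorm0 r : r != 0 -> lpnorm r (fun _ : K => 0) = 0.
Proof.
move=> r0; rewrite /lpnorm esum1 => [|x _]; last by rewrite normr0 powR0.
by rewrite /= powR0 // invr_eq0.
Qed.

Lemma lpnorm1 a : lpnorm 1 a = norm1 a.
Proof.
rewrite /lpnorm invr1 powRr1; last first.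
  by apply: fine_ge0; apply: esum_ge0 => *; rewrite lee_fin powR_ge0.
by congr fine; apply: eq_esum => x _; rewrite powRr1.
Qed.

Lemma esum_powR_le r a : 1 <= r -> nonneg a -> ell1 a ->
  (\esum_(x in [set: K]) (`|a x| `^ r)%:E <= (norm1 a `^ r)%:E)%E.
Proof.
move=> r1 a0 a1.
(* Bound [|a x|^r] linearly in [a x], using [a x <= ||a||_1]. *)
have term x : ((`|a x| `^ r)%:E <= (norm1 a `^ (r - 1) * a x)%:E)%E.
  rewrite lee_fin ger0_norm // -mulr_powRB1 ?(lt_le_trans ltr01) // mulrC.
  apply: ler_wpM2r => //; apply: ge0_ler_powR;
    by rewrite ?subr_ge0 ?nnegrE ?norm1_ge0 ?le_norm1_term.
apply: le_trans (le_esum (fun x _ => term x)) _.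
apply: le_trans (esumZl_le (powR_ge0 _ _) a0) _.
rewrite esum_norm1 // -EFinM lee_fin mulrC.
by rewrite mulr_powRB1 ?norm1_ge0 ?(lt_le_trans ltr01).
Qed.

Lemma fin_num_esum_powR r a : 1 <= r -> nonneg a -> ell1 a ->
  \esum_(x in [set: K]) (`|a x| `^ r)%:E \is a fin_num.
Proof.
move=> r1 a0 a1; rewrite ge0_fin_numE; last first.
  by apply: esum_ge0 => *; rewrite lee_fin powR_ge0.
exact: le_lt_trans (esum_powR_le r1 a0 a1) (ltry _).
Qed.

Lemma EFin_lpnorm_powR r a : 1 <= r -> nonneg a -> ell1 a ->
  (lpnorm r a `^ r)%:E = \esum_(x in [set: K]) (`|a x| `^ r)%:E.
Proof.
move=> r1 a0 a1; rewrite /lpnorm -powRrM mulVf ?gt_eqF ?(lt_le_trans ltr01) //.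
rewrite powRr1 ?fineK ?fin_num_esum_powR //.
by apply: fine_ge0; apply: esum_ge0 => *; rewrite lee_fin powR_ge0.
Qed.

Lemma lpnorm_le_norm1 r a :
  1 <= r -> nonneg a -> ell1 a -> lpnorm r a <= norm1 a.
Proof.
move=> r1 a0 a1; have r0 : 0 < r := lt_le_trans ltr01 r1.
have : lpnorm r a `^ r <= norm1 a `^ r.
  by rewrite -lee_fin EFin_lpnorm_powR // esum_powR_le.
apply: contraTT; rewrite -!ltNge.
by apply: gt0_ltr_powR; rewrite ?nnegrE ?norm1_ge0 ?lpnorm_ge0.
Qed.

Lemma lpnorm_gt0 r a : 1 <= r -> nonneg a -> ell1 a -> a <> (fun _ => 0) ->
  0 < lpnorm r a.
Proof.
move=> r1 a0 a1 anz; have r0 : 0 < r := lt_le_trans ltr01 r1.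
have /existsNP[x /eqP ax] : ~ forall x, a x = 0.
  by move=> a_eq0; apply/anz/funext.
have ax0 : 0 < a x by rewrite lt_neqAle eq_sym ax a0.
rewrite lt_def lpnorm_ge0 andbT.
apply: contraTneq (_ : 0 < (lpnorm r a `^ r)%:E)%E => [->|].
  by rewrite powR0 ?gt_eqF // ltxx.
rewrite EFin_lpnorm_powR //.
apply: lt_le_trans (esum_ge_term (a := fun i => (`|a i| `^ r)%:E) x _).
  by rewrite lte_fin powR_gt0 // normr_gt0 gt_eqF.
by move=> i; rewrite lee_fin powR_ge0.
Qed.

End lpnorm.

Definition admissible {R : realType} {K : zmodType} (F : K -> R) : Prop :=
  nonneg F /\ ell1 F /\ F <> (fun _ => 0).

Definition slice {T1 T2 V : Type} (F : T1 * T2 -> V) (x : T1) : T2 -> V :=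
  fun y => F (x, y).

Section slice.
Context {R : realType} {G1 G2 : zmodType}.
Implicit Types (F H : G1 * G2 -> R) (r : R).

Lemma esum_slice_le (A : G1 * G2 -> \bar R) x : (forall z, 0 <= A z)%E ->
  (\esum_(y in [set: G2]) A (x, y) <= \esum_(z in [set: G1 * G2]) A z)%E.
Proof.
move=> A0; rewrite esum_pair //.
apply: (esum_ge_term (a := fun x => \esum_(y in [set: G2]) A (x, y))) => i.
exact: esum_ge0.
Qed.

Lemma ell1_slice F x : ell1 F -> ell1 (slice F x).
Proof.
apply: le_lt_trans; apply: (esum_slice_le (A := fun z => (`|F z|)%:E)) => z.
by rewrite lee_fin.
Qed.

Lemma ell1_lpnorm_slice F r : 1 <= r -> nonneg F -> ell1 F ->
  ell1 (fun x => lpnorm r (slice F x)).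
Proof.
move=> r1 F0 F1; have slice0 x : nonneg (slice F x) by move=> y; exact: F0.
apply: (@ell1_le _ _ _ (fun x => norm1 (slice F x))).
- by move=> x; exact: lpnorm_ge0.
- by move=> x; apply: lpnorm_le_norm1 => //; exact: ell1_slice.
apply: le_lt_trans (F1); rewrite esum_pair => [|z]; last by rewrite lee_fin.
apply: le_esum => x _; rewrite ger0_norm ?norm1_ge0 // -esum_norm1 //.
  by apply: le_esum => y _; rewrite lee_fin ger0_norm.
exact: ell1_slice.
Qed.

Lemma lpnorm_slices F r : 1 <= r -> nonneg F -> ell1 F ->
  lpnorm r (fun x => lpnorm r (slice F x)) = lpnorm r F.
Proof.
move=> r1 F0 F1; have slice0 x : nonneg (slice F x) by move=> y; exact: F0.
rewrite /lpnorm; congr (fine _ `^ _).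
rewrite esum_pair => [|z]; last by rewrite lee_fin powR_ge0.
apply: eq_esum => x _; rewrite ger0_norm ?lpnorm_ge0 //.
by rewrite EFin_lpnorm_powR //; exact: ell1_slice.
Qed.

Lemma admissible_lpnorm_slices F r :
  1 <= r -> admissible F -> admissible (fun x => lpnorm r (slice F x)).
Proof.
move=> r1 [F0 [F1 Fnz]]; split; first by move=> x; exact: lpnorm_ge0.
split; first exact: ell1_lpnorm_slice.
move=> slices0; have := lpnorm_gt0 r1 F0 F1 Fnz.
rewrite -lpnorm_slices // slices0 lpnorm0 ?ltxx //.
exact: lt0r_neq0 (lt_le_trans ltr01 r1).
Qed.

Lemma maxconv_slice_le F H x z v : nonneg F -> nonneg H -> ell1 F -> ell1 H ->
  maxconv (slice F x) (slice H (z - x)) v <= maxconv F H (z, v).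
Proof.
move=> F0 H0 F1 H1; apply: maxconv_le => w.
exact: (maxconv_ge (z, v) (x, w) F0 H0 F1 H1).
Qed.

End slice.

Section gamma.
Context {R : realType}.

Lemma conj_exp_gt1 (p : R) : 1 < p -> 1 < conj_exp p.
Proof.
move=> p1; rewrite /conj_exp ltr_pdivlMr; last by rewrite subr_gt0.
by rewrite mul1r ltrBlDr ltrDl.
Qed.

Lemma gamma_fine_ge0 {K : zmodType} (p : R) (F : K -> R) :
  0 <= fine (gamma p F).
Proof.
apply: fine_ge0; apply/ereal_infP => _ [g [h [_ _ ->]]].
by rewrite lee_fin divr_ge0 ?norm1_ge0 // mulr_ge0 // lpnorm_ge0.
Qed.

Lemma gamma_mulr_le {K : zmodType} (p : R) (F g h : K -> R) : 1 < p ->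
  nonneg g -> ell1 g -> nonneg h -> ell1 h ->
  fine (gamma p F) * (lpnorm p g * lpnorm (conj_exp p) h) <=
    norm1 (maxconv (maxconv F g) h).
Proof.
move=> p1 g0 g1 h0 h1; have q1 := conj_exp_gt1 p1.
have p0 : p != 0 := lt0r_neq0 (lt_trans ltr01 p1).
have q0 : conj_exp p != 0 := lt0r_neq0 (lt_trans ltr01 q1).
have [->|gnz] := pselect (g = fun _ => 0).
  by rewrite lpnorm0 // mul0r mulr0 norm1_ge0.
have [->|hnz] := pselect (h = fun _ => 0).
  by rewrite lpnorm0 // !mulr0 norm1_ge0.
have gp := lpnorm_gt0 (ltW p1) g0 g1 gnz.
have hq := lpnorm_gt0 (ltW q1) h0 h1 hnz.
rewrite -(ler_pdivlMr _ _ (mulr_gt0 gp hq)).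
apply: fine_le_EFin.
  by apply: ereal_inf_lbound; exists g, h; do !split.
exact: divr_ge0 (norm1_ge0 _) (mulr_ge0 (lpnorm_ge0 _ _) (lpnorm_ge0 _ _)).
Qed.

End gamma.

Section slices_of_maxconv.
Context {R : realType} {G1 G2 : zmodType} (p : R) (f g h : G1 * G2 -> R).
Hypotheses (p1 : 1 < p) (f0 : nonneg f) (g0 : nonneg g) (h0 : nonneg h)
  (f1 : ell1 f) (g1 : ell1 g) (h1 : ell1 h).

Let gamma_f x := fine (gamma p (slice f x)).
Let norm_g x := lpnorm p (slice g x).
Let norm_h x := lpnorm (conj_exp p) (slice h x).
Let fgh := maxconv (maxconv f g) h.

Let fg0 : nonneg (maxconv f g). Proof. exact: maxconv_nonneg. Qed.
Let fg1 : ell1 (maxconv f g). Proof. exact: ell1_maxconv. Qed.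
Let fgh0 : nonneg fgh. Proof. exact: maxconv_nonneg. Qed.
Let fgh1 : ell1 fgh. Proof. exact: ell1_maxconv. Qed.

Lemma norm1_maxconv_slices_le x u a :
  norm1 (maxconv (maxconv (slice f x) (slice g (u - x))) (slice h (a - u))) <=
    norm1 (slice fgh a).
Proof.
have fg_slices_le v :
    maxconv (slice f x) (slice g (u - x)) v <= slice (maxconv f g) u v.
  exact: maxconv_slice_le x u v f0 g0 f1 g1.
apply: le_norm1 => [b|b|]; last exact: ell1_slice.
  apply: maxconv_ge0 => [v|y]; [apply: maxconv_ge0 => y|];
    [exact: f0|exact: g0|exact: h0].
apply: le_trans (maxconv_slice_le u a b fg0 h0 fg1 h1).
exact: le_maxconvl b (fun v => fg0 _) (fun y => h0 _) (ell1_slice u fg1)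
  (ell1_slice (a - u) h1) fg_slices_le.
Qed.

Lemma maxconv_gamma_slices_le a :
  maxconv (maxconv gamma_f norm_g) norm_h a <= norm1 (slice fgh a).
Proof.
apply: maxconv_le => u.
apply: maxconv_mulr_le => [||x]; [exact: lpnorm_ge0|exact: norm1_ge0|].
rewrite -mulrA; apply: le_trans (norm1_maxconv_slices_le x u a).
exact: gamma_mulr_le _ p1 (fun y => g0 _) (ell1_slice _ g1) (fun y => h0 _)
  (ell1_slice _ h1).
Qed.

Lemma norm1_maxconv_gamma_slices_le :
  norm1 (maxconv (maxconv gamma_f norm_g) norm_h) <= norm1 fgh.
Proof.
rewrite -[norm1 fgh]lpnorm1 -(lpnorm_slices (lexx 1) fgh0 fgh1) lpnorm1.
apply: le_norm1; last exact: ell1_lpnorm_slice.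
- by apply: maxconv_nonneg; [apply: maxconv_nonneg|] => x;
    rewrite /gamma_f /norm_g /norm_h ?gamma_fine_ge0 ?lpnorm_ge0.
by move=> a; rewrite lpnorm1; exact: maxconv_gamma_slices_le.
Qed.

End slices_of_maxconv.

Theorem mainTheorem13 (R : realType) (G1 G2 : zmodType) (p : R)
  (f : G1 * G2 -> R) :
  1 < p -> nonneg f -> ell1 f ->
  (gamma p (fun x : G1 => fine (gamma p (fun y : G2 => f (x, y))))
     <= gamma p f)%E.
Proof.
move=> p1 f0 f1; have q1 := conj_exp_gt1 p1.
apply/ereal_infP => _ [g [h [adm_g adm_h ->]]].
have [[g0 [g1 _]] [h0 [h1 _]]] := (adm_g, adm_h).
pose gamma_f x := fine (gamma p (slice f x)).
pose norm_g x := lpnorm p (slice g x).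
pose norm_h x := lpnorm (conj_exp p) (slice h x).
apply: (@le_trans _ _ (norm1 (maxconv (maxconv gamma_f norm_g) norm_h) /
  (lpnorm p norm_g * lpnorm (conj_exp p) norm_h))%:E).
  apply: ereal_inf_lbound; exists norm_g, norm_h; split; last by [].
    exact: admissible_lpnorm_slices (ltW p1) adm_g.
  exact: admissible_lpnorm_slices (ltW q1) adm_h.
rewrite (lpnorm_slices (ltW p1) g0 g1) (lpnorm_slices (ltW q1) h0 h1) lee_fin.
apply: ler_wpM2r; last exact: norm1_maxconv_gamma_slices_le.
by rewrite invr_ge0 mulr_ge0 ?lpnorm_ge0.
Qed.
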